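(* Let $a$ be a nonzero element of $\mathbb Z_g$, and let $i$ be an integer with $1\le i\le k$. If $\vec \theta \in \Lambda$, then \[ \sum_{1 \leq m < i} \theta_{\{m,i\},-a} + \sum_{i < m \leq k} \theta_{\{i,m\},a} \equiv 0 \pmod{2 \pi},\] where an empty sum is $0$.
   Context: Let $g\ge 2$, $k\ge 2$ be integers, $\mathbb Z_g$ the integers mod $g$, and $d=\binom{k}{2}(g-1)$. Index the coordinates of $\mathbb R^d$ by pairs $(\{i,j\},a)$ with $1\le i<j\le k$ and $a\in\mathbb Z_g\setminus\{0\}$. Define $Z:(\mathbb Z_g)^k\to\mathbb R^d$ by $[Z(\vec x)]_{\{i,j\},a}=1-1/g$ if $x_i-x_j=a$ and $-1/g$ otherwise. Define $\Phi(\vec\theta)=\sum_{\vec x\in(\mathbb Z_g)^k} g^{-k}e^{i\vec\theta\cdot Z(\vec x)}$ for $\vec\theta\in\mathbb R^d$, and $\Lambda=\{\vec\theta\in\mathbb R^d: |\Phi(\vec\theta)|=1\}$. *)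

From HB Require Import structures.
From mathcomp Require Import all_boot all_order all_algebra.
From mathcomp Require Import reals trigo.
From mathcomp Require Import complex.
Set Implicit Arguments. Unset Strict Implicit. Unset Printing Implicit Defensive.
Import Order.TTheory GRing.Theory Num.Theory.
Local Open Scope ring_scope.
Local Open Scope complex_scope.

(* Indices 1..k are represented by 'I_k (0-based).  A vector theta in R^d,
   d = C(k,2)(g-1), is represented by a function theta i j a whose value is
   only used for i < j and a != 0 (coordinate ({i,j},a)). *)

Definition Zc (R : realType) (g k : nat) (x : 'I_k -> 'Z_g) (i j : 'I_k) (a : 'Z_g) : R :=
  if x i - x j == a then 1 - (g%:R)^-1 else - (g%:R)^-1.

Definition dotZ (R : realType) (g k : nat) (theta : 'I_k -> 'I_k -> 'Z_g -> R)
  (x : 'I_k -> 'Z_g) : R :=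
  \sum_(i : 'I_k) \sum_(j : 'I_k | (i < j)%N) \sum_(a : 'Z_g | a != 0)
     theta i j a * Zc R x i j a.

Definition expi (R : realType) (t : R) : R[i] := (cos t) +i* (sin t).

Definition Phi (R : realType) (g k : nat) (theta : 'I_k -> 'I_k -> 'Z_g -> R) : R[i] :=
  \sum_(x : {ffun 'I_k -> 'Z_g}) ((g%:R ^+ k)^-1)%:C * expi (dotZ theta x).

Definition Lambda (R : realType) (g k : nat) (theta : 'I_k -> 'I_k -> 'Z_g -> R) : Prop :=
  `|Phi theta| = 1.

From HB Require Import structures.
From mathcomp Require Import all_boot all_order all_algebra.
From mathcomp Require Import boolp reals trigo.
From mathcomp Require Import complex.
Import Order.TTheory GRing.Theory Num.Theory.
Set Implicit Arguments. Unset Strict Implicit. Unset Printing Implicit Defensive.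
Local Open Scope ring_scope.

(* All the summands g^-k e^{i theta.Z(x)} of Phi have modulus g^-k and there are
   g^k of them, so |Phi(theta)| = 1 is the equality case of the triangle
   inequality: e^{i theta.Z(x)} does not depend on x.  Comparing x = 0 with the
   vector having a in coordinate i and 0 elsewhere, theta.Z(x) - theta.Z(0)
   collects exactly the coordinates ({m,i},-a) for m < i and ({i,m},a) for
   m > i, so their sum is a multiple of 2 pi. *)

Lemma sumr_if_eq (V : nmodType) (I : finType) (P : pred I) (j : I) (F : I -> V) :
  \sum_(q | P q) (if q == j then F q else 0) = if P j then F j else 0.
Proof.
rewrite big_mkcond (bigD1 j) //= eqxx big1 ?addr0 //.
by move=> q /negbTE ->; case: (P q).
Qed.

Section Periodicity.
Variable R : realType.

Lemma cos_addz (x : R) (n : int) : cos (x + n%:~R * (2 * pi)) = cos x.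
Proof.
have cos_addn (y : R) m : cos (y + m%:R * (2 * pi)) = cos y.
  by rewrite mulr_natl mulr_natl (periodicn (@cosD2pi R)).
case: n => m; first exact: cos_addn.
by rewrite NegzE mulrNz mulNr -(cos_addn (x - _) m.+1) subrK.
Qed.

Lemma cos_eq1 (x : R) : cos x = 1 -> exists n : int, x = n%:~R * (2 * pi).
Proof.
move=> cx1; set T : R := 2 * pi.
have T_gt0 : 0 < T by rewrite mulr_gt0 ?pi_gt0.
set n := Num.floor (x / T); exists n.
set r := x - n%:~R * T.
have cr1 : cos r = 1 by rewrite /r -mulNr -intrN cos_addz.
have r_ge0 : 0 <= r by rewrite subr_ge0 -ler_pdivlMr ?Num.Theory.floor_le.
have r_ltT : r < T.
  rewrite ltrBlDr -[X in _ < X + _]mul1r -mulrDl -ltr_pdivrMr // addrC.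
  by have := Num.Theory.floorD1_gt (x / T); rewrite intrD.
suff r0 : r = 0 by exact: subr0_eq.
have cos_inj0 (y : R) : 0 <= y <= pi -> cos y = 1 -> y = 0.
  move=> y_0pi cy1; apply: cos_inj; rewrite ?cos0 // in_itv /= ?lexx ?pi_ge0 //.
have [r_lepi | pi_ltr] := leP r pi; first by apply: cos_inj0; rewrite ?r_ge0.
have Tr0 : T - r = 0.
  apply: cos_inj0; last by rewrite cosB /T mulr_natl cos2pi sin2pi cr1 mul1r mul0r addr0.
  by rewrite subr_ge0 ltW //= lerBlDr /T mulr_natl mulr2n lerD2l ltW.
by move: r_ltT; rewrite (subr0_eq Tr0) ltxx.
Qed.

End Periodicity.

Local Open Scope complex_scope.

Lemma norm_expi (R : realType) (t : R) : `|expi t| = 1.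
Proof. by rewrite normc_def /= cos2Dsin2 sqrtr1. Qed.

Lemma expi_eq_cos (R : realType) (s t : R) : expi s = expi t -> cos (s - t) = 1.
Proof. by case=> cst sst; rewrite cosB cst sst -!expr2 cos2Dsin2. Qed.

Section DotZ.
Variables (R : realType) (g k : nat) (theta : 'I_k -> 'I_k -> 'Z_g -> R).

Lemma dotZ_ffun (x : 'I_k -> 'Z_g) : dotZ theta [ffun m => x m] = dotZ theta x.
Proof. by congr dotZ; apply/funext => m; rewrite ffunE. Qed.

Lemma dotZB0 (x : 'I_k -> 'Z_g) :
  dotZ theta x - dotZ theta (fun _ => 0) =
  \sum_(p : 'I_k) \sum_(q : 'I_k | (p < q)%N)
     (if x p - x q == 0 then 0 else theta p q (x p - x q)).
Proof.
rewrite /dotZ -sumrB; apply: eq_bigr => p _; rewrite -sumrB.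
apply: eq_bigr => q _; rewrite -sumrB.
transitivity (\sum_(b : 'Z_g | b != 0) (if b == x p - x q then theta p q b else 0)).
  apply: eq_bigr => b b_neq0.
  rewrite -mulrBr /Zc subrr (eq_sym 0) (negbTE b_neq0) (eq_sym b).
  by case: eqP => _; rewrite ?subrr ?mulr0 // opprK addrNK mulr1.
by rewrite sumr_if_eq; case: eqP.
Qed.

Lemma dotZB0_single (i : 'I_k) (a : 'Z_g) : a != 0 ->
  dotZ theta (fun m => if m == i then a else 0) - dotZ theta (fun _ => 0) =
  \sum_(m : 'I_k | (m < i)%N) theta m i (- a)
    + \sum_(m : 'I_k | (i < m)%N) theta i m a.
Proof.
move=> a_neq0; rewrite dotZB0.
transitivity (\sum_(p : 'I_k) \sum_(q : 'I_k | (p < q)%N)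
   ((if q == i then theta p q (- a) else 0) + (if p == i then theta p q a else 0))).
  apply: eq_bigr => p _; apply: eq_bigr => q p_lt_q.
  case: (eqVneq p i) => [p_eq_i | p_neq_i]; case: (eqVneq q i) => [q_eq_i | q_neq_i].
  - by move: p_lt_q; rewrite p_eq_i q_eq_i ltnn.
  - by rewrite p_eq_i subr0 (negbTE a_neq0) add0r.
  - by rewrite q_eq_i sub0r oppr_eq0 (negbTE a_neq0) addr0.
  - by rewrite subrr eqxx addr0.
under eq_bigr => p _ do rewrite big_split /=.
rewrite big_split /=; congr (_ + _).
  by rewrite [RHS]big_mkcond; apply: eq_bigr => p _; rewrite sumr_if_eq.
transitivity (\sum_(p : 'I_k)
  (if p == i then \sum_(q : 'I_k | (p < q)%N) theta p q a else 0)).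
  by apply: eq_bigr => p _; case: eqP => // _; rewrite big1.
by rewrite (sumr_if_eq xpredT).
Qed.

Lemma Lambda_expi_const : (1 < g)%N -> Lambda theta ->
  forall x y : 'I_k -> 'Z_g, expi (dotZ theta x) = expi (dotZ theta y).
Proof.
move=> g_gt1; rewrite /Lambda /Phi -mulr_sumr normrM => Phi_norm1.
set c : R := (g%:R ^+ k)^-1 in Phi_norm1 *.
have c_gt0 : 0 < c by rewrite invr_gt0 exprn_gt0 // ltr0n ltnW.
have card_ffun_g : #|{ffun 'I_k -> 'Z_g}| = (g ^ k)%N.
  by rewrite card_ffun !card_ord Zp_cast.
have sum_norm : `|\sum_(x : {ffun 'I_k -> 'Z_g}) expi (dotZ theta x)| =
                \sum_(x : {ffun 'I_k -> 'Z_g}) `|expi (dotZ theta x)|.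
  rewrite (eq_bigr _ (fun x _ => norm_expi _)) sumr_const card_ffun_g.
  rewrite ger0_norm ?ler0c ?ltW // in Phi_norm1.
  apply: (mulfI (x := c%:C)); first by rewrite eq_complex /= gt_eqF.
  rewrite Phi_norm1 -(rmorph_nat (@real_complex R)) -rmorphM /= natrX.
  by rewrite /c mulVf ?rmorph1 // expf_neq0 // pnatr_eq0 -lt0n ltnW.
have [t _ expi_t] := normC_sum_eq1 sum_norm (fun x _ => norm_expi _).
by move=> x y; rewrite -dotZ_ffun -[dotZ theta y]dotZ_ffun !expi_t.
Qed.

Lemma Lambda_dotZB : (1 < g)%N -> Lambda theta ->
  forall x y : 'I_k -> 'Z_g,
  exists n : int, dotZ theta x - dotZ theta y = n%:~R * (2 * pi).
Proof.
by move=> g_gt1 L x y; apply/cos_eq1/expi_eq_cos/Lambda_expi_const.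
Qed.

End DotZ.

Theorem lemma2p5 (R : realType) (g k : nat) (hg : (2 <= g)%N) (hk : (2 <= k)%N)
  (a : 'Z_g) (ha : a != 0) (i : 'I_k) (theta : 'I_k -> 'I_k -> 'Z_g -> R) :
  Lambda theta ->
  exists n : int,
    \sum_(m : 'I_k | (m < i)%N) theta m i (- a)
    + \sum_(m : 'I_k | (i < m)%N) theta i m a = n%:~R * (2 * pi).
Proof.
by move=> L; rewrite -dotZB0_single //; apply: Lambda_dotZB.
Qed.
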